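(* Let $(p_k)_{k\in\mathbb{Z}}$ with $p_k\in(0,1)$, $q_k=1-p_k$, and let $X=(X_n)_{n\ge0}$ be the nearest-neighbour random walk on $\mathbb{Z}$ started at $X_0=0$ which jumps from $k$ to $k+1$ with probability $p_k$ and from $k$ to $k-1$ with probability $q_k$. Let $\Theta=\inf\{n>0: X_n=0\}$ and, on $\{\Theta<\infty\}$, let $X^\Theta=(X_n:0\le n\le\Theta)$. (i) For every positive excursion $x$, the probability $\mathbb{P}(X^\Theta=x\mid X^\Theta\in\mathcal{X}^+)$ depends only on the level numbers $N(x)$; i.e. if $x,x'\in\mathcal{X}^+$ satisfy $N(x)=N(x')$, then $\mathbb{P}(X^\Theta=x\mid X^\Theta\in\mathcal{X}^+)=\mathbb{P}(X^\Theta=x'\mid X^\Theta\in\mathcal{X}^+)$. (ii) Conversely, assume that there is no finite nonempty set $K\subset\{1,2,\dots\}$ and integers $a_h\in\mathbb{Z}\setminus\{0\}$, $h\in K$, with $\sum_{h\in K}a_h\log(p_hq_{h+1})=0$. Then for $x,x'\in\mathcal{X}^+$, $\mathbb{P}(X^\Theta=x\mid X^\Theta\in\mathcal{X}^+)=\mathbb{P}(X^\Theta=x'\mid X^\Theta\in\mathcal{X}^+)$ implies $N(x)=N(x')$.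
   Context: A positive excursion is a finite sequence $x=(x_n:0\le n\le\theta)$ of integers with $x_0=x_\theta=0$, $x_n>0$ for $0<n<\theta$, and jumps $y_n=x_{n+1}-x_n\in\{1,-1\}$ for $0\le n<\theta$; $\theta=\theta(x)$ is its length. $\mathcal{X}^+$ denotes the set of all positive excursions. For $x\in\mathcal{X}^+$, its level numbers are the sequence $N(x)=(N_h(x):h\ge0)$, where $N_h(x)=|\{n\in[0,\theta):y_n=1,\ x_n=h\}|$ (the number of up-steps starting from level $h$, i.e. the number of ''individuals born at level $h$''). The event $\{X^\Theta\in\mathcal{X}^+\}$ is the event that $\Theta<\infty$ and $X_1=1$; it has positive probability. *)

From Stdlib Require Import Reals ZArith List Arith ClassicalEpsilon.
From Coquelicot Require Import Coquelicot.
Import ListNotations.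
Open Scope R_scope.

(* A finite path x = (x_0, ..., x_theta) is represented as a list of integers;
   its length theta is (length x - 1). *)
Definition xn (x : list Z) (n : nat) : Z := nth n x 0%Z.
Definition theta (x : list Z) : nat := (length x - 1)%nat.
Definition jump (x : list Z) (n : nat) : Z := (xn x (S n) - xn x n)%Z.

(* Positive excursion: x_0 = x_theta = 0, x_n > 0 for 0 < n < theta,
   jumps in {1,-1}; theta >= 1 (as for X^Theta, Theta > 0). *)
Definition is_pexc (x : list Z) : Prop :=
  x <> nil /\ (0 < theta x)%nat /\
  xn x 0 = 0%Z /\ xn x (theta x) = 0%Z /\
  (forall n, (0 < n < theta x)%nat -> (0 < xn x n)%Z) /\
  (forall n, (n < theta x)%nat -> jump x n = 1%Z \/ jump x n = (-1)%Z).

Definition level_num (x : list Z) (h : nat) : nat :=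
  length (filter (fun n => (Z.eqb (jump x n) 1 && Z.eqb (xn x n) (Z.of_nat h))%bool)
                 (seq 0 (theta x))).

Definition step_prob (p : Z -> R) (k y : Z) : R :=
  if Z.eqb y 1 then p k else 1 - p k.

(* P(X_0 = x_0, ..., X_theta = x_theta) for the walk started at 0
   (x_0 = 0): product of the transition probabilities.  For a positive
   excursion x this is exactly P(X^Theta = x). *)
Definition path_prob (p : Z -> R) (x : list Z) : R :=
  fold_right Rmult 1 (map (fun n => step_prob p (xn x n) (jump x n)) (seq 0 (theta x))).

Fixpoint all_steps (m : nat) : list (list bool) :=
  match m with
  | O => [nil]
  | S m' => map (cons true) (all_steps m') ++ map (cons false) (all_steps m')
  end.
Fixpoint path_from (k : Z) (s : list bool) : list Z :=
  match s with
  | nil => [k]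
  | b :: s' => k :: path_from (if b then (k + 1)%Z else (k - 1)%Z) s'
  end.

(* P(X^Theta in X^+, Theta = m) *)
Definition pexc_mass_len (p : Z -> R) (m : nat) : R :=
  fold_right Rplus 0
    (map (fun s => if excluded_middle_informative (is_pexc (path_from 0 s))
                   then path_prob p (path_from 0 s) else 0) (all_steps m)).

Definition pexc_mass (p : Z -> R) : R := Series (pexc_mass_len p).

Definition cond_prob (p : Z -> R) (x : list Z) : R := path_prob p x / pexc_mass p.

Definition no_log_relation (p : Z -> R) : Prop :=
  forall (K : list nat) (a : nat -> Z),
    K <> nil -> NoDup K ->
    (forall h, In h K -> (1 <= h)%nat /\ a h <> 0%Z) ->
    fold_right Rplus 0
      (map (fun h => IZR (a h) * ln (p (Z.of_nat h) * (1 - p (Z.of_nat h + 1)%Z))) K) <> 0.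

(* Along a positive excursion, ln P(X^Theta = x) telescopes: with the potential
   Psi(k) = sum_(1 <= j <= k) ln q_j, an up-step from k contributes
   ln (p_k q_(k+1)) + Psi(k) - Psi(k+1), a down-step from k contributes
   Psi(k) - Psi(k-1), and Psi vanishes at both ends.  Hence
   ln P(X^Theta = x) = sum_h N_h(x) ln (p_h q_(h+1)), which gives (i).
   For (ii) the conditioning mass must be positive, and in particular the series
   defining it must converge (Coquelicot's [Series] is 0 on divergent series): its
   partial sums are at most 1 because excursion step sequences form a prefix-free
   set.  Equal conditional probabilities then give
   sum_h (N_h(x) - N_h(x')) ln (p_h q_(h+1)) = 0 with N_0 = 1 on both sides, and
   the hypothesis forces N(x) = N(x'). *)

From Stdlib Require Import Reals ZArith List Lia Lra ClassicalEpsilon.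
From Coquelicot Require Import Coquelicot.
Open Scope R_scope.

Notation fsum l := (fold_right Rplus 0 l).

Lemma fsum_app (l1 l2 : list R) : fsum (l1 ++ l2) = fsum l1 + fsum l2.
Proof. induction l1 as [|r l1 IH]; simpl; [ring | rewrite IH; ring]. Qed.

Lemma fsum_map_mul_l {A} (c : R) (f : A -> R) l :
  fsum (map (fun x => c * f x) l) = c * fsum (map f l).
Proof. induction l as [|a l IH]; simpl; [ring | rewrite IH; ring]. Qed.

Lemma fsum_map_plus {A} (f g : A -> R) l :
  fsum (map (fun x => f x + g x) l) = fsum (map f l) + fsum (map g l).
Proof. induction l as [|a l IH]; simpl; [ring | rewrite IH; ring]. Qed.

Lemma fsum_map_minus {A} (f g : A -> R) l :
  fsum (map (fun x => f x - g x) l) = fsum (map f l) - fsum (map g l).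
Proof. induction l as [|a l IH]; simpl; [ring | rewrite IH; ring]. Qed.

Lemma fsum_map_ext_in {A} (f g : A -> R) l :
  (forall x, In x l -> f x = g x) -> fsum (map f l) = fsum (map g l).
Proof. intros H; f_equal; apply map_ext_in, H. Qed.

Lemma fsum_map_eq0 {A} (f : A -> R) l :
  (forall x, In x l -> f x = 0) -> fsum (map f l) = 0.
Proof.
  intros H; rewrite (fsum_map_ext_in f (fun _ => 0)) by exact H; clear H.
  induction l as [|a l IH]; simpl; [ring | rewrite IH; ring].
Qed.

Lemma fsum_map_ge0 {A} (f : A -> R) l :
  (forall x, 0 <= f x) -> 0 <= fsum (map f l).
Proof.
  intros H; induction l as [|a l IH]; simpl; [lra|].
  specialize (H a); lra.
Qed.

Lemma fsum_map_ge_in {A} (f : A -> R) l x :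
  (forall x, 0 <= f x) -> In x l -> f x <= fsum (map f l).
Proof.
  intros H; induction l as [|a l IH]; intros Hin; [destruct Hin|]; simpl.
  pose proof (fsum_map_ge0 f l H); pose proof (H a).
  destruct Hin as [<- | Hin]; [lra | specialize (IH Hin); lra].
Qed.

Lemma fsum_map_filter {A} (f : A -> R) (P : A -> bool) l :
  (forall x, P x = false -> f x = 0) -> fsum (map f (filter P l)) = fsum (map f l).
Proof.
  intros H; induction l as [|a l IH]; simpl; auto.
  destruct (P a) eqn:E; simpl; rewrite IH; [|rewrite H by exact E]; ring.
Qed.

Lemma fsum_telescope (f : nat -> R) n :
  fsum (map (fun i => f i - f (S i)) (seq 0 n)) = f 0%nat - f n.
Proof.
  induction n as [|n IH]; [simpl; ring|].
  rewrite seq_S, map_app, fsum_app, IH; simpl; ring.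
Qed.

Lemma sum_n_fsum (a : nat -> R) n : sum_n a n = fsum (map a (seq 0 (S n))).
Proof.
  induction n as [|n IH]; [rewrite sum_O; simpl; ring|].
  rewrite sum_Sn, IH, (seq_S (S n)), map_app, fsum_app; simpl.
  change plus with Rplus; ring.
Qed.

Lemma fold_right_Rmult_pos (l : list R) :
  (forall r, In r l -> 0 < r) -> 0 < fold_right Rmult 1 l.
Proof.
  induction l as [|r l IH]; intros H; simpl; [lra|].
  apply Rmult_lt_0_compat; [apply H; left | apply IH; intros; apply H; right]; auto.
Qed.

Lemma ln_fold_right_Rmult (l : list R) :
  (forall r, In r l -> 0 < r) -> ln (fold_right Rmult 1 l) = fsum (map ln l).
Proof.
  induction l as [|r l IH]; intros H; simpl; [apply ln_1|].
  assert (Hl : forall r', In r' l -> 0 < r') by (intros; apply H; right; auto).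
  rewrite ln_mult, IH; auto.
  - apply H; left; auto.
  - apply fold_right_Rmult_pos, Hl.
Qed.

Lemma fsum_indicator (a : nat -> R) n z : (0 <= z < Z.of_nat n)%Z ->
  fsum (map (fun h => if Z.eqb z (Z.of_nat h) then a h else 0) (seq 0 n)) = a (Z.to_nat z).
Proof.
  induction n as [|n IH]; intros Hz; [lia|].
  rewrite seq_S, map_app, fsum_app; simpl.
  destruct (Z.eqb_spec z (Z.of_nat n)) as [E|E].
  - rewrite fsum_map_eq0, E, Nat2Z.id; [ring|].
    intros h Hh; apply in_seq in Hh.
    destruct (Z.eqb_spec z (Z.of_nat h)); [lia | auto].
  - rewrite IH by lia; ring.
Qed.

Lemma fsum_by_value (J : nat -> bool) (X : nat -> Z) (a : nat -> R) H l :
  (forall n, In n l -> J n = true -> (0 <= X n < Z.of_nat H)%Z) ->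
  fsum (map (fun n => if J n then a (Z.to_nat (X n)) else 0) l) =
  fsum (map (fun h =>
              INR (length (filter (fun n => (J n && Z.eqb (X n) (Z.of_nat h))%bool) l)) * a h)
            (seq 0 H)).
Proof.
  induction l as [|n l IH]; intros Hl.
  - symmetry; apply fsum_map_eq0; intros; simpl; ring.
  - symmetry; rewrite (fsum_map_ext_in _
      (fun h => (if (J n && Z.eqb (X n) (Z.of_nat h))%bool then a h else 0)
              + INR (length (filter (fun n => (J n && Z.eqb (X n) (Z.of_nat h))%bool) l)) * a h)).
    2:{ intros h _; simpl filter.
        destruct (J n && Z.eqb (X n) (Z.of_nat h))%bool; cbn [length]; [rewrite S_INR|]; ring. }
    rewrite fsum_map_plus, <- IH by (intros; apply Hl; [right|]; auto).
    simpl; f_equal. destruct (J n) eqn:EJ; simpl.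
    + apply fsum_indicator, Hl; auto. left; auto.
    + apply fsum_map_eq0; auto.
Qed.

Fixpoint walk_weight (p : Z -> R) (k : Z) (s : list bool) : R :=
  match s with
  | nil => 1
  | b :: s' => step_prob p k (if b then 1%Z else (-1)%Z) *
               walk_weight p (if b then (k + 1)%Z else (k - 1)%Z) s'
  end.

Lemma length_path_from k s : length (path_from k s) = S (length s).
Proof. revert k; induction s; intros k; simpl; auto. Qed.

Lemma theta_path_from k s : theta (path_from k s) = length s.
Proof. unfold theta; rewrite length_path_from; lia. Qed.

Lemma xn_path_from_0 k s : xn (path_from k s) 0 = k.
Proof. destruct s; reflexivity. Qed.

Lemma xn_path_from_app k s t n : (n <= length s)%nat ->
  xn (path_from k (s ++ t)) n = xn (path_from k s) n.
Proof.
  revert k n; induction s as [|b s IH]; intros k n Hn.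
  - simpl in Hn; replace n with 0%nat by lia; simpl; apply xn_path_from_0.
  - destruct n as [|n]; [reflexivity|]; simpl in Hn.
    apply (IH _ n); lia.
Qed.

Lemma path_prob_path_from p k s : path_prob p (path_from k s) = walk_weight p k s.
Proof.
  revert k; induction s as [|b s IH]; intros k; [reflexivity|].
  specialize (IH (if b then (k + 1)%Z else (k - 1)%Z)).
  unfold path_prob in *; rewrite theta_path_from in *; simpl length.
  cbn [seq map fold_right walk_weight]; rewrite <- seq_shift, map_map, <- IH.
  f_equal. unfold jump; cbn [xn nth path_from].
  change (nth 0 ?l 0%Z) with (xn l 0); rewrite xn_path_from_0.
  destruct b; f_equal; lia.
Qed.

Definition steps (x : list Z) : list bool :=
  map (fun n => Z.eqb (jump x n) 1) (seq 0 (theta x)).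

Lemma path_from_steps x : x <> nil ->
  (forall n, (n < theta x)%nat -> jump x n = 1%Z \/ jump x n = (-1)%Z) ->
  path_from (xn x 0) (steps x) = x.
Proof.
  unfold steps; induction x as [|a [|b l] IH]; intros Hne Hj; [congruence | reflexivity|].
  assert (Eth : theta (a :: b :: l) = S (theta (b :: l))) by (unfold theta; simpl; lia).
  assert (Hj0 := Hj 0%nat ltac:(rewrite Eth; lia)).
  rewrite Eth; cbn [seq map path_from]; rewrite <- seq_shift, map_map.
  replace (if Z.eqb (jump (a :: b :: l) 0) 1 then _ else _) with (xn (b :: l) 0).
  - f_equal; apply IH; [congruence|].
    intros n Hn; apply (Hj (S n)); rewrite Eth; lia.
  - unfold jump, xn in *; simpl in *; destruct (Z.eqb_spec (b - a) 1); lia.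
Qed.

Lemma steps_in_all_steps s : In s (all_steps (length s)).
Proof.
  induction s as [|b s IH]; simpl; auto.
  apply in_or_app; destruct b; [left | right]; apply in_map; auto.
Qed.

Section PositiveProbabilities.

Variable p : Z -> R.
Hypothesis hp : forall k : Z, 0 < p k < 1.

Lemma step_prob_pos k y : 0 < step_prob p k y.
Proof. unfold step_prob; destruct (Z.eqb y 1); specialize (hp k); lra. Qed.

Lemma walk_weight_pos k s : 0 < walk_weight p k s.
Proof.
  revert k; induction s; intros k; simpl; [lra|].
  apply Rmult_lt_0_compat; auto using step_prob_pos.
Qed.

Lemma path_prob_pos x : 0 < path_prob p x.
Proof.
  apply fold_right_Rmult_pos; intros r Hr.
  apply in_map_iff in Hr; destruct Hr as [n [<- _]]; apply step_prob_pos.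
Qed.

End PositiveProbabilities.

Definition restricted_mass (p : Z -> R) (A : list bool -> Prop) (k : Z) (m : nat) : R :=
  fsum (map (fun s => if excluded_middle_informative (A s) then walk_weight p k s else 0)
            (all_steps m)).

Definition prefix_free (A : list bool -> Prop) : Prop :=
  forall s t, A s -> A (s ++ t) -> t = nil.

Lemma restricted_mass_0 p A k :
  restricted_mass p A k 0 = if excluded_middle_informative (A nil) then 1 else 0.
Proof. unfold restricted_mass; simpl; destruct excluded_middle_informative; simpl; ring. Qed.

Lemma restricted_mass_S p A k m :
  restricted_mass p A k (S m) =
    p k * restricted_mass p (fun s => A (true :: s)) (k + 1)%Z m
  + (1 - p k) * restricted_mass p (fun s => A (false :: s)) (k - 1)%Z m.
Proof.
  unfold restricted_mass; simpl all_steps.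
  rewrite map_app, fsum_app, !map_map, <- !fsum_map_mul_l.
  f_equal; f_equal; apply map_ext; intros s;
    destruct excluded_middle_informative; simpl; unfold step_prob; simpl; ring.
Qed.

Lemma restricted_mass_empty p A k m : (forall s, ~ A s) -> restricted_mass p A k m = 0.
Proof.
  intros H; apply fsum_map_eq0; intros s _.
  destruct excluded_middle_informative as [HA|]; [destruct (H s HA) | reflexivity].
Qed.

Section SubProbability.

Variable p : Z -> R.
Hypothesis hp : forall k : Z, 0 < p k < 1.

Lemma restricted_mass_ge0 A k m : 0 <= restricted_mass p A k m.
Proof.
  apply fsum_map_ge0; intros s; destruct excluded_middle_informative;
    [left; apply walk_weight_pos, hp | lra].
Qed.

(* Condition on the first step; if [A] contains the empty sequence, it contains nothing else. *)
Lemma restricted_mass_partial_le1 M : forall A k,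
  prefix_free A -> fsum (map (restricted_mass p A k) (seq 0 (S M))) <= 1.
Proof.
  induction M as [|M IH]; intros A k HA.
  - simpl; rewrite restricted_mass_0; destruct excluded_middle_informative; lra.
  - change (seq 0 (S (S M))) with (0%nat :: seq 1 (S M)).
    cbn [map fold_right]; rewrite <- seq_shift, map_map.
    rewrite (fsum_map_ext_in _ _ _ (fun m _ => restricted_mass_S p A k m)).
    rewrite fsum_map_plus, !fsum_map_mul_l, restricted_mass_0.
    set (At := fun s => A (true :: s)); set (Af := fun s => A (false :: s)).
    assert (HAt : prefix_free At) by (intros s t; apply (HA (true :: s) t)).
    assert (HAf : prefix_free Af) by (intros s t; apply (HA (false :: s) t)).
    pose proof (IH At (k + 1)%Z HAt); pose proof (IH Af (k - 1)%Z HAf).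
    pose proof (fsum_map_ge0 _ (seq 0 (S M)) (restricted_mass_ge0 At (k + 1)%Z)).
    pose proof (fsum_map_ge0 _ (seq 0 (S M)) (restricted_mass_ge0 Af (k - 1)%Z)).
    pose proof (hp k).
    destruct excluded_middle_informative as [Hnil|]; [|nra].
    rewrite !fsum_map_eq0; [lra | |];
      intros m _; apply restricted_mass_empty; intros s Hs;
      discriminate (HA nil _ Hnil Hs).
Qed.

End SubProbability.

Lemma pexc_prefix_free : prefix_free (fun s => is_pexc (path_from 0 s)).
Proof.
  intros s [|c t] Hs Hst; [reflexivity | exfalso].
  destruct Hs as (_ & Hlen & _ & Hend & _).
  destruct Hst as (_ & _ & _ & _ & Hpos & _).
  rewrite theta_path_from in *; rewrite length_app in Hpos; simpl in Hpos.
  specialize (Hpos (length s) ltac:(lia)).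
  rewrite xn_path_from_app, Hend in Hpos by lia; lia.
Qed.

Lemma pexc_mass_len_restricted p m :
  pexc_mass_len p m = restricted_mass p (fun s => is_pexc (path_from 0 s)) 0 m.
Proof.
  unfold pexc_mass_len, restricted_mass; f_equal; apply map_ext; intros s.
  destruct excluded_middle_informative; auto using path_prob_path_from.
Qed.

Lemma Series_ge_term (a : nat -> R) B n :
  (forall m, 0 <= a m) -> (forall m, sum_n a m <= B) -> a n <= Series a.
Proof.
  intros Ha HB.
  assert (Hinc : forall m, sum_n a m <= sum_n a (S m)).
  { intros m; rewrite sum_Sn; change plus with Rplus; specialize (Ha (S m)); lra. }
  pose proof (Lim_seq_correct' _ (ex_finite_lim_seq_incr _ _ Hinc HB)) as Hlim.
  eapply Rle_trans; [|apply (is_lim_seq_incr_compare _ _ Hlim Hinc n)].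
  rewrite sum_n_fsum; apply fsum_map_ge_in; [exact Ha | apply in_seq; lia].
Qed.

Section PositiveMass.

Variable p : Z -> R.
Hypothesis hp : forall k : Z, 0 < p k < 1.

Lemma pexc_mass_len_ge_path_prob x : is_pexc x -> path_prob p x <= pexc_mass_len p (theta x).
Proof.
  intros Hx; pose proof Hx as (Hne & _ & H0 & _ & _ & Hj).
  assert (Hx_steps : path_from 0 (steps x) = x) by (rewrite <- H0; apply path_from_steps; auto).
  assert (Hlen : length (steps x) = theta x)
    by (unfold steps; rewrite length_map, length_seq; reflexivity).
  unfold pexc_mass_len; rewrite <- Hlen.
  eapply Rle_trans; [|apply (fsum_map_ge_in _ _ (steps x))].
  - cbv beta; rewrite Hx_steps; destruct excluded_middle_informative; [lra | contradiction].
  - intros s; destruct excluded_middle_informative; [left; apply path_prob_pos, hp | lra].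
  - apply steps_in_all_steps.
Qed.

Lemma pexc_mass_pos x : is_pexc x -> 0 < pexc_mass p.
Proof.
  intros Hx.
  apply (Rlt_le_trans _ (path_prob p x)); [apply path_prob_pos, hp|].
  eapply Rle_trans; [apply pexc_mass_len_ge_path_prob, Hx|].
  apply (Series_ge_term _ 1).
  - intros m; rewrite pexc_mass_len_restricted; apply restricted_mass_ge0, hp.
  - intros m; rewrite sum_n_fsum, (fsum_map_ext_in _ _ _ (fun m _ => pexc_mass_len_restricted p m)).
    apply restricted_mass_partial_le1, pexc_prefix_free; exact hp.
Qed.

End PositiveMass.

Definition ln_updown (p : Z -> R) (h : nat) : R :=
  ln (p (Z.of_nat h) * (1 - p (Z.of_nat h + 1)%Z)).

Fixpoint down_potential (p : Z -> R) (k : nat) : R :=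
  match k with
  | O => 0
  | S k' => down_potential p k' + ln (1 - p (Z.of_nat (S k')))
  end.

Lemma pexc_xn_ge0 x n : is_pexc x -> (n <= theta x)%nat -> (0 <= xn x n)%Z.
Proof.
  intros (_ & _ & H0 & Hend & Hpos & _) Hn.
  destruct (Nat.eq_dec n 0) as [->|]; [lia|].
  destruct (Nat.eq_dec n (theta x)) as [->|]; [lia|].
  specialize (Hpos n ltac:(lia)); lia.
Qed.

Lemma pexc_xn_le x n : is_pexc x -> (n <= theta x)%nat -> (xn x n <= Z.of_nat n)%Z.
Proof.
  intros (_ & _ & H0 & _ & _ & Hj); induction n as [|n IH]; intros Hn; [lia|].
  specialize (Hj n ltac:(lia)); specialize (IH ltac:(lia)); unfold jump in Hj; lia.
Qed.

Section LogPathProb.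

Variable p : Z -> R.
Hypothesis hp : forall k : Z, 0 < p k < 1.

Lemma ln_step_prob_up (k : nat) :
  ln (step_prob p (Z.of_nat k) 1) = ln_updown p k + down_potential p k - down_potential p (S k).
Proof.
  unfold step_prob, ln_updown; cbn [Z.eqb Pos.eqb]; cbn [down_potential].
  replace (Z.of_nat (S k)) with (Z.of_nat k + 1)%Z by lia.
  pose proof (hp (Z.of_nat k)); pose proof (hp (Z.of_nat k + 1)%Z).
  rewrite ln_mult by lra; ring.
Qed.

Lemma ln_step_prob_down (k : nat) :
  ln (step_prob p (Z.of_nat (S k)) (-1)) = down_potential p (S k) - down_potential p k.
Proof. unfold step_prob; cbn [Z.eqb Pos.eqb]; cbn [down_potential]; ring. Qed.

Lemma ln_path_prob_pexc_steps x : is_pexc x ->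
  ln (path_prob p x) =
  fsum (map (fun n => if Z.eqb (jump x n) 1 then ln_updown p (Z.to_nat (xn x n)) else 0)
            (seq 0 (theta x))).
Proof.
  intros Hx; pose proof Hx as (_ & _ & H0 & Hend & _ & Hj).
  set (f n := down_potential p (Z.to_nat (xn x n))).
  unfold path_prob; rewrite ln_fold_right_Rmult, map_map.
  2:{ intros r Hr; apply in_map_iff in Hr; destruct Hr as [n [<- _]]; apply step_prob_pos, hp. }
  rewrite (fsum_map_ext_in _
    (fun n => (if Z.eqb (jump x n) 1 then ln_updown p (Z.to_nat (xn x n)) else 0)
              + (f n - f (S n)))).
  { rewrite fsum_map_plus, fsum_telescope; unfold f; rewrite H0, Hend; ring. }
  intros n Hn; apply in_seq in Hn.
  pose proof (pexc_xn_ge0 x n Hx ltac:(lia)); pose proof (pexc_xn_ge0 x (S n) Hx ltac:(lia)).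
  unfold f; destruct (Hj n ltac:(lia)) as [E|E]; rewrite E; unfold jump in E; cbn [Z.eqb Pos.eqb].
  - replace (xn x n) with (Z.of_nat (Z.to_nat (xn x n))) at 1 by lia.
    replace (Z.to_nat (xn x (S n))) with (S (Z.to_nat (xn x n))) by lia.
    rewrite ln_step_prob_up; ring.
  - replace (xn x n) with (Z.of_nat (S (Z.to_nat (xn x (S n))))) at 1 by lia.
    replace (Z.to_nat (xn x n)) with (S (Z.to_nat (xn x (S n)))) by lia.
    rewrite ln_step_prob_down; ring.
Qed.

Lemma ln_path_prob_pexc x H : is_pexc x -> (theta x <= H)%nat ->
  ln (path_prob p x) = fsum (map (fun h => INR (level_num x h) * ln_updown p h) (seq 0 H)).
Proof.
  intros Hx HH; rewrite ln_path_prob_pexc_steps by exact Hx.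
  apply fsum_by_value; intros n Hn _; apply in_seq in Hn.
  pose proof (pexc_xn_ge0 x n Hx ltac:(lia)); pose proof (pexc_xn_le x n Hx ltac:(lia)); lia.
Qed.

End LogPathProb.

Lemma level_num_pexc_0 x : is_pexc x -> level_num x 0 = 1%nat.
Proof.
  intros Hx; pose proof Hx as (_ & Ht & H0 & Hend & Hpos & Hj).
  assert (Hj0 : jump x 0 = 1%Z).
  { destruct (Hj 0%nat Ht) as [E|E]; auto; exfalso; unfold jump in E.
    destruct (Nat.eq_dec (theta x) 1) as [E1|E1].
    - rewrite E1 in Hend; lia.
    - specialize (Hpos 1%nat ltac:(lia)); lia. }
  unfold level_num; destruct (theta x) as [|t]; [lia|].
  cbn [seq filter]; rewrite Hj0, H0; cbn.
  rewrite (filter_ext_in _ (fun _ => false)), filter_false; [reflexivity|].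
  intros n Hn; apply in_seq in Hn; specialize (Hpos n ltac:(lia)).
  destruct (Z.eqb_spec (xn x n) 0); [lia | apply Bool.andb_false_r].
Qed.

Lemma level_num_pexc_ge_theta x h : is_pexc x -> (theta x <= h)%nat -> level_num x h = 0%nat.
Proof.
  intros Hx Hh; unfold level_num.
  rewrite (filter_ext_in _ (fun _ => false)), filter_false; [reflexivity|].
  intros n Hn; apply in_seq in Hn; pose proof (pexc_xn_le x n Hx ltac:(lia)).
  destruct (Z.eqb_spec (xn x n) (Z.of_nat h)); [lia | apply Bool.andb_false_r].
Qed.

Lemma no_log_relation_coeffs_eq0 p (a : nat -> Z) m :
  no_log_relation p ->
  fsum (map (fun h => IZR (a h) * ln_updown p h) (seq 1 m)) = 0 ->
  forall h, (1 <= h <= m)%nat -> a h = 0%Z.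
Proof.
  intros Hnl Hsum h Hh.
  destruct (Z.eq_dec (a h) 0) as [|Hah]; [assumption | exfalso].
  set (K := filter (fun h => negb (Z.eqb (a h) 0)) (seq 1 m)).
  apply (Hnl K a).
  - assert (Hin : In h K).
    { apply filter_In; split; [apply in_seq; lia|].
      apply Z.eqb_neq in Hah; rewrite Hah; reflexivity. }
    destruct K; [destruct Hin | discriminate].
  - apply NoDup_filter, seq_NoDup.
  - intros k Hk; apply filter_In in Hk; destruct Hk as [Hk Hak]; apply in_seq in Hk.
    split; [lia|]; destruct (Z.eqb_spec (a k) 0); [discriminate | assumption].
  - unfold K; rewrite fsum_map_filter; [exact Hsum|].
    intros k Hk; destruct (Z.eqb_spec (a k) 0) as [E|]; [rewrite E; simpl; ring | discriminate].
Qed.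

(* [no_log_relation] says nothing about level 0, hence the hypothesis [N 0 = N' 0]. *)
Lemma eq_of_ln_updown_sums_eq p (N N' : nat -> nat) m :
  no_log_relation p -> N 0%nat = N' 0%nat -> (forall h, (m < h)%nat -> N h = N' h) ->
  fsum (map (fun h => INR (N h) * ln_updown p h) (seq 0 (S m))) =
  fsum (map (fun h => INR (N' h) * ln_updown p h) (seq 0 (S m))) ->
  forall h, N h = N' h.
Proof.
  intros Hnl H0 Hbig Heq h.
  destruct (Nat.eq_dec h 0) as [->|Hh0]; [exact H0|].
  destruct (le_lt_dec h m) as [Hhm|]; [|auto].
  apply Nat2Z.inj, Z.sub_move_0_r.
  apply (no_log_relation_coeffs_eq0 p (fun h => Z.of_nat (N h) - Z.of_nat (N' h))%Z m Hnl);
    [|lia].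
  rewrite (fsum_map_ext_in _ (fun h => INR (N h) * ln_updown p h - INR (N' h) * ln_updown p h)).
  2:{ intros k _; rewrite minus_IZR, <- !INR_IZR_INZ; ring. }
  rewrite fsum_map_minus; cbn [seq map fold_right] in Heq; rewrite H0 in Heq; lra.
Qed.

Theorem proposition1 (p : Z -> R) (hp : forall k : Z, 0 < p k < 1) :
  (forall x x' : list Z, is_pexc x -> is_pexc x' ->
     (forall h : nat, level_num x h = level_num x' h) ->
     cond_prob p x = cond_prob p x') /\
  (no_log_relation p ->
   forall x x' : list Z, is_pexc x -> is_pexc x' ->
     cond_prob p x = cond_prob p x' ->
     forall h : nat, level_num x h = level_num x' h).
Proof.
  assert (Hlog : forall x x', is_pexc x -> is_pexc x' ->
    let H := S (max (theta x) (theta x')) in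
    ln (path_prob p x) = fsum (map (fun h => INR (level_num x h) * ln_updown p h) (seq 0 H)) /\
    ln (path_prob p x') = fsum (map (fun h => INR (level_num x' h) * ln_updown p h) (seq 0 H))).
  { intros x x' Hx Hx'; split; apply ln_path_prob_pexc; auto; lia. }
  split.
  - intros x x' Hx Hx' HN; unfold cond_prob; f_equal.
    apply ln_inv; try apply path_prob_pos, hp.
    destruct (Hlog x x' Hx Hx') as [-> ->].
    apply fsum_map_ext_in; intros h _; rewrite HN; reflexivity.
  - intros Hnl x x' Hx Hx' Hc.
    assert (Hpp : path_prob p x = path_prob p x').
    { pose proof (pexc_mass_pos p hp x Hx); unfold cond_prob in Hc.
      apply (Rmult_eq_reg_r (/ pexc_mass p)); [exact Hc | apply Rinv_neq_0_compat; lra]. }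
    apply (eq_of_ln_updown_sums_eq p _ _ (max (theta x) (theta x')) Hnl).
    + rewrite !level_num_pexc_0; auto.
    + intros h Hh; rewrite !level_num_pexc_ge_theta; auto; lia.
    + destruct (Hlog x x' Hx Hx') as [<- <-]; rewrite Hpp; reflexivity.
Qed.
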